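(* Let $\beta>\alpha>0$ and let $q=(q_1,q_2,q_3,q_4)\in(\mathbb{R}^2)^4$ be a convex non-collinear central configuration of the planar Newtonian 4-body problem with masses $m_1=m_2=\beta$, $m_3=m_4=\alpha$, the vertices being labelled so that $q_1,q_2,q_3,q_4$ is the cyclic order around the convex quadrilateral (so the equal masses occupy adjacent vertices). If $r_{13}=r_{24}$, then the configuration is symmetric and forms an isosceles trapezoid: the side $q_1q_2$ is parallel to the side $q_3q_4$, and $r_{14}=r_{23}$.
   Context: Bodies have positions $q_i\in\mathbb{R}^2$ and masses $m_i>0$, $i=1,\dots,4$; $r_{ij}=\|q_i-q_j\|$. The Newtonian potential is $U(q)=\sum_{i<j}m_im_j/r_{ij}$ (gravitational constant $1$). A configuration $q$ with $q_i\neq q_j$ for all $i\neq j$ and center of mass $\sum_i m_iq_i=0$ is a central configuration if there is a constant $\lambda$ with $\frac{1}{m_i}\frac{\partial U}{\partial q_i}=\lambda q_i$ for all $i$, i.e. $\sum_{j\neq i} m_j\frac{q_j-q_i}{r_{ij}^3}=\lambda q_i$. ''Convex non-collinear'' means the four points are the vertices of a strictly convex quadrilateral (no three of them collinear). *)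

From Stdlib Require Import Reals.
Open Scope R_scope.

Definition pt := (R * R)%type.

Definition rdist (p q : pt) : R :=
  sqrt ((fst p - fst q)^2 + (snd p - snd q)^2).

(* Orientation (twice the signed area) of the triangle (a,b,c). *)
Definition orient (a b c : pt) : R :=
  (fst b - fst a) * (snd c - snd a) - (snd b - snd a) * (fst c - fst a).

(* Planar 4-body configuration: positions q : nat -> pt used at indices 1..4,
   masses m : nat -> R at 1..4. *)
Definition idx4 (i : nat) : Prop := (1 <= i <= 4)%nat.

Definition force_x (m : nat -> R) (q : nat -> pt) (i j : nat) : R :=
  if Nat.eqb i j then 0
  else m j * (fst (q j) - fst (q i)) / (rdist (q i) (q j))^3.
Definition force_y (m : nat -> R) (q : nat -> pt) (i j : nat) : R :=
  if Nat.eqb i j then 0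
  else m j * (snd (q j) - snd (q i)) / (rdist (q i) (q j))^3.

Definition central_configuration4 (m : nat -> R) (q : nat -> pt) : Prop :=
  (forall i j, idx4 i -> idx4 j -> i <> j -> q i <> q j) /\
  m 1%nat * fst (q 1%nat) + m 2%nat * fst (q 2%nat)
    + m 3%nat * fst (q 3%nat) + m 4%nat * fst (q 4%nat) = 0 /\
  m 1%nat * snd (q 1%nat) + m 2%nat * snd (q 2%nat)
    + m 3%nat * snd (q 3%nat) + m 4%nat * snd (q 4%nat) = 0 /\
  exists lambda : R, forall i, idx4 i ->
    force_x m q i 1 + force_x m q i 2 + force_x m q i 3 + force_x m q i 4
      = lambda * fst (q i) /\
    force_y m q i 1 + force_y m q i 2 + force_y m q i 3 + force_y m q i 4
      = lambda * snd (q i).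

(* q1,q2,q3,q4 are, in this cyclic order, the vertices of a strictly convex
   quadrilateral (no three collinear): all consecutive turns have the same
   strict sign. *)
Definition strictly_convex_cyclic (a b c d : pt) : Prop :=
  (0 < orient a b c /\ 0 < orient b c d /\ 0 < orient c d a /\ 0 < orient d a b) \/
  (orient a b c < 0 /\ orient b c d < 0 /\ orient c d a < 0 /\ orient d a b < 0).

Definition parallel (a b c d : pt) : Prop :=
  (fst b - fst a) * (snd d - snd c) - (snd b - snd a) * (fst d - fst c) = 0.

(* With k := lambda / M (M the total mass), the centre-of-mass condition turns
   the central configuration equations into the balances
   sum_j m_j (1 / r_ij^3 + k) (q_j - q_i) = 0.  Crossing the balance of body i
   with q_l - q_i gives Dziobek-type relations between the weights
   W_ij = 1 / r_ij^3 + k and the four turns T1..T4 of the quadrilateral, which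
   satisfy T1 + T3 = T2 + T4.  Since r13 = r24 gives W13 = W24, two of these
   relations force T1 T3 = T2 T4, hence T1 = T4 or T1 = T2.  If T1 = T4 then
   T2 = T3, i.e. q1q2 is parallel to q3q4, and two more relations give
   W14 = W23, i.e. r14 = r23.  If T1 = T2 then q2q3 is parallel to q4q1, the
   equal diagonals make the quadrilateral an isosceles trapezoid with
   r12 = r34, and the relations at bodies 2 and 3 then force
   (beta^2 - alpha^2) W13 = 0; W13 = 0 is impossible because it would make all
   six mutual distances equal. *)

From Stdlib Require Import Reals Lra Lia.
Open Scope R_scope.

Lemma rdist_sym (p q : pt) : rdist p q = rdist q p.
Proof. unfold rdist; f_equal; ring. Qed.

Lemma rdist_sq (p q : pt) : rdist p q ^ 2 = (fst p - fst q)^2 + (snd p - snd q)^2.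
Proof. unfold rdist; apply pow2_sqrt, Rplus_le_le_0_compat; apply pow2_ge_0. Qed.

Lemma rdist_pos (p q : pt) : p <> q -> 0 < rdist p q.
Proof.
  destruct p as [a b], q as [c d]; intro Hpq; unfold rdist; simpl.
  apply sqrt_lt_R0.
  destruct (Req_dec a c) as [<-|Hac].
  - assert (Hbd : b - d <> 0) by (intro; apply Hpq; f_equal; lra).
    pose proof (Rlt_0_sqr _ Hbd); unfold Rsqr in *; lra.
  - pose proof (Rlt_0_sqr (a - c) ltac:(lra)); pose proof (pow2_ge_0 (b - d)).
    unfold Rsqr in *; lra.
Qed.

Lemma pow3_inj (a b : R) : 0 < a -> 0 < b -> a ^ 3 = b ^ 3 -> a = b.
Proof.
  intros Ha Hb H.
  assert (E : (a - b) * (a * a + a * b + b * b) = 0) by (transitivity (a ^ 3 - b ^ 3); [ring | lra]).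
  apply Rmult_integral in E as [E|E]; nra.
Qed.

Lemma orient_quadrilateral (a b c d : pt) :
  orient a b c + orient c d a = orient b c d + orient d a b.
Proof. unfold orient; ring. Qed.

Lemma parallel_of_orient_eq (a b c d : pt) :
  orient b c d = orient c d a -> parallel a b c d.
Proof. unfold orient, parallel; lra. Qed.

Definition pair_weight (q : nat -> pt) (k : R) (i j : nat) : R :=
  / rdist (q i) (q j) ^ 3 + k.

Lemma pair_weight_sym (q : nat -> pt) (k : R) (i j : nat) :
  pair_weight q k i j = pair_weight q k j i.
Proof. unfold pair_weight; now rewrite rdist_sym. Qed.

Lemma pair_weight_inj (q : nat -> pt) (k : R) (i j i' j' : nat) :
  q i <> q j -> q i' <> q j' -> pair_weight q k i j = pair_weight q k i' j' ->
  rdist (q i) (q j) = rdist (q i') (q j').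
Proof.
  unfold pair_weight; intros Hij Hij' Hw.
  apply pow3_inj; try apply rdist_pos; auto.
  apply Rinv_eq_reg; lra.
Qed.

(* The term j = i vanishes whatever the junk value of [/ 0] is. *)
Definition reduced_balance (m : nat -> R) (q : nat -> pt) (k : R) : Prop :=
  forall i, idx4 i ->
    m 1%nat * pair_weight q k i 1 * (fst (q 1%nat) - fst (q i))
    + m 2%nat * pair_weight q k i 2 * (fst (q 2%nat) - fst (q i))
    + m 3%nat * pair_weight q k i 3 * (fst (q 3%nat) - fst (q i))
    + m 4%nat * pair_weight q k i 4 * (fst (q 4%nat) - fst (q i)) = 0 /\
    m 1%nat * pair_weight q k i 1 * (snd (q 1%nat) - snd (q i))
    + m 2%nat * pair_weight q k i 2 * (snd (q 2%nat) - snd (q i))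
    + m 3%nat * pair_weight q k i 3 * (snd (q 3%nat) - snd (q i))
    + m 4%nat * pair_weight q k i 4 * (snd (q 4%nat) - snd (q i)) = 0.

Lemma force_x_eq (m : nat -> R) (q : nat -> pt) (i j : nat) :
  force_x m q i j = m j * / rdist (q i) (q j) ^ 3 * (fst (q j) - fst (q i)).
Proof. unfold force_x; destruct (Nat.eqb_spec i j) as [->|_]; [ring | unfold Rdiv; ring]. Qed.

Lemma force_y_eq (m : nat -> R) (q : nat -> pt) (i j : nat) :
  force_y m q i j = m j * / rdist (q i) (q j) ^ 3 * (snd (q j) - snd (q i)).
Proof. unfold force_y; destruct (Nat.eqb_spec i j) as [->|_]; [ring | unfold Rdiv; ring]. Qed.

Lemma central_configuration4_reduced_balance (m : nat -> R) (q : nat -> pt) :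
  central_configuration4 m q -> m 1%nat + m 2%nat + m 3%nat + m 4%nat <> 0 ->
  exists k, reduced_balance m q k.
Proof.
  intros (_ & Hcx & Hcy & lambda & Hlambda) HM.
  exists (lambda / (m 1%nat + m 2%nat + m 3%nat + m 4%nat)); intros i Hi.
  assert (Hlambda_eq : lambda = lambda / (m 1%nat + m 2%nat + m 3%nat + m 4%nat)
                                * (m 1%nat + m 2%nat + m 3%nat + m 4%nat))
    by (field; exact HM).
  set (k := lambda / _) in *; clearbody k.
  destruct (Hlambda i Hi) as [Fx Fy]; rewrite Hlambda_eq in Fx, Fy.
  rewrite !force_x_eq in Fx; rewrite !force_y_eq in Fy.
  unfold pair_weight; split.
  - rewrite <- (Rmult_0_r k), <- Hcx; lra.
  - rewrite <- (Rmult_0_r k), <- Hcy; lra.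
Qed.

Lemma reduced_balance_orient (m : nat -> R) (q : nat -> pt) (k : R) (i : nat) (e : pt) :
  reduced_balance m q k -> idx4 i ->
  m 1%nat * pair_weight q k i 1 * orient (q i) (q 1%nat) e
  + m 2%nat * pair_weight q k i 2 * orient (q i) (q 2%nat) e
  + m 3%nat * pair_weight q k i 3 * orient (q i) (q 3%nat) e
  + m 4%nat * pair_weight q k i 4 * orient (q i) (q 4%nat) e = 0.
Proof.
  intros Hbal Hi; destruct (Hbal i Hi) as [Hx Hy].
  apply (f_equal (fun t => t * (snd e - snd (q i)))) in Hx.
  apply (f_equal (fun t => t * (fst e - fst (q i)))) in Hy.
  unfold orient; lra.
Qed.

Lemma reduced_balance_dziobek (m : nat -> R) (q : nat -> pt) (k : R) :
  reduced_balance m q k ->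
  m 2%nat * pair_weight q k 1 2 * orient (q 4%nat) (q 1%nat) (q 2%nat)
  + m 3%nat * pair_weight q k 1 3 * orient (q 3%nat) (q 4%nat) (q 1%nat) = 0 /\
  m 3%nat * pair_weight q k 1 3 * orient (q 1%nat) (q 2%nat) (q 3%nat)
  + m 4%nat * pair_weight q k 1 4 * orient (q 4%nat) (q 1%nat) (q 2%nat) = 0 /\
  m 1%nat * pair_weight q k 1 2 * orient (q 1%nat) (q 2%nat) (q 3%nat)
  + m 4%nat * pair_weight q k 2 4 * orient (q 2%nat) (q 3%nat) (q 4%nat) = 0 /\
  m 3%nat * pair_weight q k 2 3 * orient (q 1%nat) (q 2%nat) (q 3%nat)
  + m 4%nat * pair_weight q k 2 4 * orient (q 4%nat) (q 1%nat) (q 2%nat) = 0 /\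
  m 1%nat * pair_weight q k 1 3 * orient (q 1%nat) (q 2%nat) (q 3%nat)
  + m 4%nat * pair_weight q k 3 4 * orient (q 2%nat) (q 3%nat) (q 4%nat) = 0.
Proof.
  intros Hbal.
  assert (I1 : idx4 1) by (unfold idx4; lia).
  assert (I2 : idx4 2) by (unfold idx4; lia).
  assert (I3 : idx4 3) by (unfold idx4; lia).
  pose proof (reduced_balance_orient m q k 1 (q 4%nat) Hbal I1) as B14.
  pose proof (reduced_balance_orient m q k 1 (q 2%nat) Hbal I1) as B12.
  pose proof (reduced_balance_orient m q k 2 (q 3%nat) Hbal I2) as B23.
  pose proof (reduced_balance_orient m q k 2 (q 1%nat) Hbal I2) as B21.
  pose proof (reduced_balance_orient m q k 3 (q 2%nat) Hbal I3) as B32.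
  rewrite (pair_weight_sym q k 2 1) in B23, B21.
  rewrite (pair_weight_sym q k 3 1) in B32.
  unfold orient in *; repeat split; lra.
Qed.

Lemma strictly_convex_cyclic_orient_neq0 (a b c d : pt) :
  strictly_convex_cyclic a b c d ->
  orient a b c <> 0 /\ orient b c d <> 0 /\ orient c d a <> 0 /\ orient d a b <> 0.
Proof. unfold strictly_convex_cyclic; intros [H|H]; lra. Qed.

Lemma strictly_convex_cyclic_opposite_turns (a b c d : pt) :
  strictly_convex_cyclic a b c d -> 0 < orient b c d * orient d a b.
Proof. unfold strictly_convex_cyclic; intros [H|H]; nra. Qed.

Lemma no_four_equidistant_points (a b c d : pt) :
  a <> b -> rdist a c = rdist a b -> rdist a d = rdist a b ->
  rdist b c = rdist a b -> rdist b d = rdist a b -> rdist c d = rdist a b -> False.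
Proof.
  intros Hab Hac Had Hbc Hbd Hcd.
  assert (HD : 0 < rdist a b ^ 2) by (apply pow_lt, rdist_pos, Hab).
  assert (Eab := rdist_sq a b).
  apply (f_equal (fun r => r ^ 2)) in Hac, Had, Hbc, Hbd, Hcd.
  rewrite rdist_sq in Hac, Had, Hbc, Hbd, Hcd.
  set (D := rdist a b ^ 2) in *; clearbody D.
  destruct a as [ax ay], b as [bx by_], c as [cx cy], d as [dx dy]; simpl in *.
  set (ux := bx - ax); set (uy := by_ - ay); set (vx := cx - ax); set (vy := cy - ay).
  set (wx := dx - ax); set (wy := dy - ay).
  (* Three vectors of the plane have a vanishing Gram determinant; for
     u = b - a, v = c - a, w = d - a its entries would all be D or D/2. *)
  assert (Gram : (ux*ux+uy*uy)*((vx*vx+vy*vy)*(wx*wx+wy*wy) - (vx*wx+vy*wy)^2)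
    - (ux*vx+uy*vy)*((ux*vx+uy*vy)*(wx*wx+wy*wy) - (vx*wx+vy*wy)*(ux*wx+uy*wy))
    + (ux*wx+uy*wy)*((ux*vx+uy*vy)*(vx*wx+vy*wy) - (vx*vx+vy*vy)*(ux*wx+uy*wy)) = 0)
    by ring.
  assert (Huu : ux*ux+uy*uy = D) by (unfold ux, uy; lra).
  assert (Hvv : vx*vx+vy*vy = D) by (unfold vx, vy; lra).
  assert (Hww : wx*wx+wy*wy = D) by (unfold wx, wy; lra).
  assert (Huv : ux*vx+uy*vy = D/2) by (unfold ux, uy, vx, vy; lra).
  assert (Huw : ux*wx+uy*wy = D/2) by (unfold ux, uy, wx, wy; lra).
  assert (Hvw : vx*wx+vy*wy = D/2) by (unfold vx, vy, wx, wy; lra).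
  rewrite Huu, Hvv, Hww, Huv, Huw, Hvw in Gram.
  assert (0 < D ^ 3) by (apply pow_lt, HD).
  nra.
Qed.

Lemma isosceles_of_equal_diagonals (a b c d : pt) :
  0 < orient b c d * orient d a b -> rdist a c = rdist b d -> parallel d a b c ->
  rdist a b = rdist c d.
Proof.
  intros Hconv Hdiag Hpar.
  apply (f_equal (fun r => r ^ 2)) in Hdiag; rewrite !rdist_sq in Hdiag.
  unfold rdist; f_equal.
  destruct a as [ax ay], b as [bx by_], c as [cx cy], d as [dx dy].
  unfold orient, parallel in *; simpl in *.
  set (ex := cx - bx); set (ey := cy - by_); set (fx := dx - ax); set (fy := dy - ay).
  set (N := (ex + fx) ^ 2 + (ey + fy) ^ 2).
  (* With e = c - b, f = d - a and w = a + d - b - c, the difference of the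
     squared legs times |e + f|^2 is a combination of the difference of the
     squared diagonals and of the cross product e x f. *)
  assert (Key : ((ax-bx)^2 + (ay-by_)^2 - ((cx-dx)^2 + (cy-dy)^2)) * N =
    ((bx-dx)^2 + (by_-dy)^2 - ((ax-cx)^2 + (ay-cy)^2))
      * (2 * (ex*ex + ey*ey) + 2 * (ex*fx + ey*fy) - N)
    - 2 * (ex*fy - ey*fx) * ((ex+fx) * (ay+dy-by_-cy) - (ey+fy) * (ax+dx-bx-cx)))
    by (unfold N, ex, ey, fx, fy; ring).
  replace (ex*fy - ey*fx) with 0 in Key by (unfold ex, ey, fx, fy; lra).
  replace ((bx-dx)^2 + (by_-dy)^2 - ((ax-cx)^2 + (ay-cy)^2)) with 0 in Key by lra.
  assert (Hsides : (ax-bx)^2 + (ay-by_)^2 - ((cx-dx)^2 + (cy-dy)^2) = 0 \/ N = 0)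
    by (apply Rmult_integral; lra).
  destruct Hsides as [Hsides|HN]; [lra | exfalso].
  (* N = 0 means c - b = a - d: the quadrilateral would be self-intersecting. *)
  assert (Hxy : ex + fx = 0 /\ ey + fy = 0)
    by (apply Rplus_sqr_eq_0; unfold Rsqr; rewrite <- HN; unfold N; ring).
  destruct Hxy as [Hx Hy]; unfold ex, fx, ey, fy in Hx, Hy.
  replace cx with (bx + ax - dx) in Hconv by lra.
  replace cy with (by_ + ay - dy) in Hconv by lra.
  pose proof (pow2_ge_0 ((ax - dx) * (dy - by_) - (ay - dy) * (dx - bx))).
  lra.
Qed.

Section EqualPairsDziobek.

(* [Hbodyi_l] is the balance of body i crossed with q_l - q_i, for masses
   (beta, beta, alpha, alpha), turns T1 = [q1 q2 q3], ..., T4 = [q4 q1 q2] and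
   W24 already replaced by W13. *)
Variables alpha beta T1 T2 T3 T4 W12 W13 W14 W23 W34 : R.
Hypotheses (Halpha : 0 < alpha) (Halpha_beta : alpha < beta)
  (HT1 : T1 <> 0) (HT2 : T2 <> 0) (HT4 : T4 <> 0)
  (Hturns : T1 + T3 = T2 + T4)
  (Hbody1_4 : beta * W12 * T4 + alpha * W13 * T3 = 0)
  (Hbody1_2 : alpha * W13 * T1 + alpha * W14 * T4 = 0)
  (Hbody2_3 : beta * W12 * T1 + alpha * W13 * T2 = 0)
  (Hbody2_1 : alpha * W23 * T1 + alpha * W13 * T4 = 0)
  (Hbody3_2 : beta * W13 * T1 + alpha * W34 * T2 = 0).

Lemma dziobek_weights_vanish :
  W13 = 0 -> W12 = 0 /\ W14 = 0 /\ W23 = 0 /\ W34 = 0.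
Proof.
  intros H13; rewrite H13 in *.
  repeat split.
  - apply (Rmult_eq_reg_l (beta * T4)); [lra | apply Rmult_integral_contrapositive; lra].
  - apply (Rmult_eq_reg_l (alpha * T4)); [lra | apply Rmult_integral_contrapositive; lra].
  - apply (Rmult_eq_reg_l (alpha * T1)); [lra | apply Rmult_integral_contrapositive; lra].
  - apply (Rmult_eq_reg_l (alpha * T2)); [lra | apply Rmult_integral_contrapositive; lra].
Qed.

Lemma dziobek_turns_dichotomy : W13 <> 0 -> T1 = T4 \/ T1 = T2.
Proof.
  intros H13.
  assert (Hprod : alpha * W13 * (T1 * T3 - T2 * T4) = 0).
  { transitivity (T1 * (beta * W12 * T4 + alpha * W13 * T3)
                  - T4 * (beta * W12 * T1 + alpha * W13 * T2)); [ring|].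
    rewrite Hbody1_4, Hbody2_3; ring. }
  assert (Hfactor : (T1 - T4) * (T1 - T2) = 0).
  { apply Rmult_integral in Hprod as [H|H]; [apply Rmult_integral in H as [H|H]; lra|].
    transitivity (T1 * (T1 + T3 - T2 - T4) - (T1 * T3 - T2 * T4)); [ring|].
    replace (T1 + T3 - T2 - T4) with 0 by lra; lra. }
  apply Rmult_integral in Hfactor as [H|H]; lra.
Qed.

Lemma dziobek_equal_pairs :
  W13 <> 0 -> (T1 = T2 -> W12 = W34) -> T2 = T3 /\ W14 = W23.
Proof.
  intros H13 Hlegs.
  destruct (dziobek_turns_dichotomy H13) as [H14 | H12].
  - split; [lra|].
    rewrite <- H14 in Hbody1_2, Hbody2_1.
    apply (Rmult_eq_reg_l (alpha * T1)); [lra | apply Rmult_integral_contrapositive; lra].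
  - exfalso; specialize (Hlegs H12).
    rewrite <- H12 in Hbody2_3, Hbody3_2; rewrite <- Hlegs in Hbody3_2.
    assert (H2 : beta * W12 + alpha * W13 = 0) by (apply (Rmult_eq_reg_l T1); lra).
    assert (H3 : beta * W13 + alpha * W12 = 0) by (apply (Rmult_eq_reg_l T1); lra).
    assert (Hdiff : (beta * beta - alpha * alpha) * W13 = 0).
    { transitivity (beta * (beta * W13 + alpha * W12) - alpha * (beta * W12 + alpha * W13));
        [ring | rewrite H2, H3; ring]. }
    apply Rmult_integral in Hdiff as [Hd|Hd]; nra.
Qed.

End EqualPairsDziobek.

Theorem theorem1p1 (alpha beta : R) (m : nat -> R) (q : nat -> pt) :
  0 < alpha -> alpha < beta ->
  m 1%nat = beta -> m 2%nat = beta -> m 3%nat = alpha -> m 4%nat = alpha ->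
  central_configuration4 m q ->
  strictly_convex_cyclic (q 1%nat) (q 2%nat) (q 3%nat) (q 4%nat) ->
  rdist (q 1%nat) (q 3%nat) = rdist (q 2%nat) (q 4%nat) ->
  parallel (q 1%nat) (q 2%nat) (q 3%nat) (q 4%nat) /\
  rdist (q 1%nat) (q 4%nat) = rdist (q 2%nat) (q 3%nat).
Proof.
  intros Halpha Halpha_beta Hm1 Hm2 Hm3 Hm4 Hcc Hconv Hdiag.
  assert (Hne : forall i j, idx4 i -> idx4 j -> i <> j -> q i <> q j) by apply Hcc.
  destruct (central_configuration4_reduced_balance m q Hcc) as [k Hbal]; [lra|].
  destruct (reduced_balance_dziobek m q k Hbal) as (B14 & B12 & B23 & B21 & B32).
  rewrite Hm1, Hm2, Hm3, Hm4 in *.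
  assert (W24 : pair_weight q k 2 4 = pair_weight q k 1 3)
    by (unfold pair_weight; now rewrite Hdiag).
  rewrite W24 in B23, B21.
  destruct (strictly_convex_cyclic_orient_neq0 _ _ _ _ Hconv) as (T1 & T2 & _ & T4).
  assert (W13 : pair_weight q k 1 3 <> 0).
  { intros W13.
    destruct (dziobek_weights_vanish _ _ _ _ _ _ _ _ _ _ _ Halpha Halpha_beta T1 T2 T4
                B14 B12 B23 B21 B32 W13) as (W12 & W14 & W23 & W34).
    apply (no_four_equidistant_points (q 1%nat) (q 2%nat) (q 3%nat) (q 4%nat));
      try apply (pair_weight_inj q k); try lra;
      apply Hne; unfold idx4; lia. }
  assert (Hlegs : orient (q 1%nat) (q 2%nat) (q 3%nat) = orient (q 2%nat) (q 3%nat) (q 4%nat) ->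
                  pair_weight q k 1 2 = pair_weight q k 3 4).
  { intros T12; unfold pair_weight.
    rewrite (isosceles_of_equal_diagonals _ _ _ _
               (strictly_convex_cyclic_opposite_turns _ _ _ _ Hconv) Hdiag
               (parallel_of_orient_eq _ _ _ _ T12)).
    reflexivity. }
  destruct (dziobek_equal_pairs _ _ _ _ _ _ _ _ _ _ _ Halpha Halpha_beta T1 T2 T4
              (orient_quadrilateral _ _ _ _) B14 B12 B23 B21 B32 W13 Hlegs) as [T23 W14].
  split.
  - apply parallel_of_orient_eq, T23.
  - apply (pair_weight_inj q k); [apply Hne; unfold idx4; lia .. | exact W14].
Qed.
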